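(* Given a word sequence $X$ of length $\ell=O(\sqrt{w})$, one can compute $\mathsf{pmin}(X)$ in $O(1)$ time on the UWRAM.
   Context: Model of computation (UWRAM, ultra-wide word RAM): a word RAM with $w$-bit words supporting standard arithmetic, bitwise boolean operations and shifts on words in unit time. In addition there are ultrawords of $w^2$ bits, on which addition, subtraction, shifts and bitwise boolean operations take unit time. A word sequence $X$ of length $\ell$ is a sequence of $\ell$ words numbered from right to left starting at $0$; $X\langle i\rangle$ denotes its $i$-th word; a word sequence of length $O(w)$ is stored in $O(1)$ ultrawords. The model supports in unit time: reading/writing a single word or $w$ contiguous words; scattered read (given a word sequence $A$ of $w$ addresses, produce $X$ with $X\langle i\rangle$ equal to the content of memory address $A\langle i\rangle$; addresses may repeat); scattered write (given word sequences $X$ and $A$, with the addresses in $A$ distinct, set the content of address $A\langle i\rangle$ to $X\langle i\rangle$); compress (map a word sequence of length $\ell\le w$ whose words are each $0$ or $1$ to the $\ell$-bit string of those bits); spread (the inverse of compress). Time is the number of instructions. Precomputed constant word sequences are assumed available. Prefix minimum: for a word sequence $X$ of length $\ell$, $\mathsf{pmin}(X)$ is the word sequence $P$ of length $\ell$ with $P\langle i\rangle=\min(X\langle i\rangle,X\langle i-1\rangle,\dots,X\langle 0\rangle)$ for $0\le i<\ell$. *)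

From Stdlib Require List.
From mathcomp Require Import all_boot.

Set Implicit Arguments.
Unset Strict Implicit.
Unset Printing Implicit Defensive.

Fixpoint pmin_at (X : seq nat) (i : nat) : nat :=
  match i with
  | 0 => nth 0 X 0
  | i'.+1 => minn (pmin_at X i') (nth 0 X i'.+1)
  end.

(* a word is a nat < 2^w ; an ultraword is a nat < 2^(w^2), i.e. w words;
   word i of an ultraword occupies bits [i*w, (i+1)*w) (numbered right to left) *)
Definition wmod (w a : nat) : nat := a %% 2 ^ w.
Definition umod (w a : nat) : nat := a %% 2 ^ (w * w).
Definition uword (w u i : nat) : nat := (u %/ 2 ^ (i * w)) %% 2 ^ w.
Definition mk_ultra (w : nat) (f : nat -> nat) : nat :=
  sumn [seq (f i %% 2 ^ w) * 2 ^ (i * w) | i <- iota 0 w].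

Inductive wop := WAdd | WSub | WMul | WDiv | WMod | WAnd | WOr | WXor
               | WShl | WShr | WLt | WEq.
Inductive uop := UAdd | USub | UAnd | UOr | UXor.

Inductive instr :=
  | WConst  (d c : nat)
  | WBin    (o : wop) (d a b : nat)
  | WNot    (d a : nat)
  | UConst  (d c : nat)              (* ur d := c (precomputed constant)     *)
  | UBin    (o : uop) (d a b : nat)
  | UShl    (d a k : nat)
  | UShr    (d a k : nat)
  | UNot    (d a : nat)
  | WLoad   (d a : nat)
  | WStore  (a s : nat)
  | ULoad   (d a : nat)
  | UStore  (a s : nat)
  | UGather (d a : nat)
  | UScatter (a s : nat)             (* scattered write, distinct addresses  *)
  | Compress (d s : nat)
  | Spread  (d s : nat)
  | Jz      (r t : nat)
  | Jmp     (t : nat).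

Definition program := seq instr.

Record state := State {
  pc  : nat;
  wr  : nat -> nat;
  ur  : nat -> nat;
  mem : nat -> nat
}.

Definition upd (f : nat -> nat) (i v : nat) : nat -> nat :=
  fun j => if j == i then v else f j.

Definition wbin (w : nat) (o : wop) (x y : nat) : option nat :=
  match o with
  | WAdd => Some (wmod w (x + y))
  | WSub => Some (wmod w (x + 2 ^ w - wmod w y))
  | WMul => Some (wmod w (x * y))
  | WDiv => if y == 0 then None else Some (x %/ y)
  | WMod => if y == 0 then None else Some (x %% y)
  | WAnd => Some (wmod w (Nat.land x y))
  | WOr  => Some (wmod w (Nat.lor x y))
  | WXor => Some (wmod w (Nat.lxor x y))
  | WShl => Some (wmod w (x * 2 ^ y))
  | WShr => Some (x %/ 2 ^ y)
  | WLt  => Some (nat_of_bool (x < y))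
  | WEq  => Some (nat_of_bool (x == y))
  end.

Definition ubin (w : nat) (o : uop) (x y : nat) : nat :=
  match o with
  | UAdd => umod w (x + y)
  | USub => umod w (x + 2 ^ (w * w) - umod w y)
  | UAnd => umod w (Nat.land x y)
  | UOr  => umod w (Nat.lor x y)
  | UXor => umod w (Nat.lxor x y)
  end.

(* one instruction; None = the machine is stuck (illegal operation:
   division by zero, scattered write with repeated addresses, compress
   of a sequence whose words are not all 0/1).  A halted machine
   (pc beyond the program) stays put. *)
Definition step (w : nat) (p : program) (s : state) : option state :=
  let 'State pc0 R U M := s in
  let nxt R' U' M' := Some (State pc0.+1 R' U' M') in
  match List.nth_error p pc0 with
  | None => Some s
  | Some i =>
    match i with
    | WConst d c => nxt (upd R d (wmod w c)) U M
    | WBin o d a b =>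
        match wbin w o (R a) (R b) with
        | Some v => nxt (upd R d v) U M
        | None => None
        end
    | WNot d a => nxt (upd R d (2 ^ w - 1 - R a)) U M
    | UConst d c => nxt R (upd U d (umod w c)) M
    | UBin o d a b => nxt R (upd U d (ubin w o (U a) (U b))) M
    | UShl d a k => nxt R (upd U d (umod w (U a * 2 ^ R k))) M
    | UShr d a k => nxt R (upd U d (U a %/ 2 ^ R k)) M
    | UNot d a => nxt R (upd U d (2 ^ (w * w) - 1 - U a)) M
    | WLoad d a => nxt (upd R d (M (R a))) U M
    | WStore a s0 => nxt R U (upd M (R a) (R s0))
    | ULoad d a => nxt R (upd U d (mk_ultra w (fun i => M (R a + i)))) M
    | UStore a s0 =>
        nxt R U (fun j => if (R a <= j) && (j < R a + w)
                          then uword w (U s0) (j - R a) else M j)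
    | UGather d a => nxt R (upd U d (mk_ultra w (fun i => M (uword w (U a) i)))) M
    | UScatter a s0 =>
        let addrs := [seq uword w (U a) i | i <- iota 0 w] in
        if uniq addrs then
          nxt R U (fun j => if j \in addrs
                            then uword w (U s0) (index j addrs) else M j)
        else None
    | Compress d s0 =>
        if all (fun i => uword w (U s0) i <= 1) (iota 0 w) then
          nxt (upd R d (sumn [seq uword w (U s0) i * 2 ^ i | i <- iota 0 w])) U M
        else None
    | Spread d s0 => nxt R (upd U d (mk_ultra w (fun i => (R s0 %/ 2 ^ i) %% 2))) M
    | Jz r t => if R r == 0 then Some (State t R U M) else nxt R U M
    | Jmp t => Some (State t R U M)
    end
  end.

Fixpoint exec (w : nat) (p : program) (n : nat) (s : state) : option state :=
  match n with
  | 0 => Some s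
  | n'.+1 => obind (exec w p n') (step w p s)
  end.

Definition halted (p : program) (s : state) : Prop := size p <= pc s.

Definition init_state (X : seq nat) : state :=
  State 0 (fun _ => 0) (fun _ => 0)
        (fun j => if j < size X then nth 0 X j else 0).

Definition computes_pmin_in (w l T : nat) (p : program) : Prop :=
  forall X : seq nat, size X = l -> all (fun x => x < 2 ^ w) X ->
    exists s, exec w p T (init_state X) = Some s /\ halted p s /\
      forall i, i < l -> mem s i = pmin_at X i.

(* Compare every pair of positions at once: entry (j, k) of the l x l matrix
   says whether x k beats x j (is smaller, or equal and to the left).  The
   matrix is cut into chunks of about w / (2 (l + 1)) rows, each stored in one
   ultraword with two words per entry; as l = O(sqrt w) there are O(1) chunks.
   A chunk takes a constant number of instructions: gather x j and x k into
   every entry and subtract, so that the carry into the high word is the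
   comparison bit; close every row with a set guard bit and subtract one from
   the row, so that the borrow runs exactly up to the first position beating j.
   Entry (j, i) thus becomes all ones iff j is the leftmost argmin of
   x 0, ..., x i; masking turns such entries into the scatter address i and
   all others into distinct dummy addresses, and one scattered write of the
   gathered x j stores every prefix minimum whose argmin lies in the chunk. *)

From Stdlib Require Import PeanoNat.
From mathcomp Require Import all_boot zify.
Set Implicit Arguments.
Unset Strict Implicit.
Unset Printing Implicit Defensive.

Lemma Nat_powE a b : Nat.pow a b = a ^ b.
Proof. by elim: b => [|b IH] //=; rewrite expnS IH mulnE. Qed.

Lemma Nat_divE a b : 0 < b -> Nat.div a b = a %/ b.
Proof.
move=> b_gt0; symmetry; apply: (Nat.div_unique _ _ _ (a %% b)).
  by apply/ltP; rewrite ltn_mod.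
by rewrite {1}(divn_eq a b) mulnC.
Qed.

Lemma Nat_modE a b : 0 < b -> Nat.modulo a b = a %% b.
Proof.
move=> b_gt0; symmetry; apply: (Nat.mod_unique _ _ (a %/ b)).
  by apply/ltP; rewrite ltn_mod.
by rewrite {1}(divn_eq a b) mulnC.
Qed.

Lemma land_small_ones w x : x < 2 ^ w -> Nat.land (2 ^ w - 1) x = x.
Proof.
move=> x_lt; rewrite Nat.land_comm subn1 -Nat_powE -Nat.ones_equiv Nat.land_ones.
by rewrite Nat_powE Nat_modE ?expn_gt0 // modn_small.
Qed.

Lemma land_bit1 b : b <= 1 -> Nat.land b 1 = b.
Proof. by case: b => [|[|]]. Qed.

Lemma land1_even x : x %% 2 = 0 -> Nat.land 1 x = 0.
Proof. by move=> x_even; rewrite Nat.land_comm -[1]/(Nat.ones 1) Nat.land_ones Nat_modE. Qed.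

Lemma uwordE_land w u t : uword w u t = Nat.land (Nat.shiftr u (t * w)) (Nat.ones w).
Proof.
by rewrite Nat.land_ones Nat.shiftr_div_pow2 !Nat_powE Nat_divE ?Nat_modE ?expn_gt0.
Qed.

Lemma uword_land w x y t :
  uword w (Nat.land x y) t = Nat.land (uword w x t) (uword w y t).
Proof.
rewrite !uwordE_land Nat.shiftr_land.
set a := Nat.shiftr x _; set b := Nat.shiftr y _; set o := Nat.ones w.
rewrite -!Nat.land_assoc; congr Nat.land.
by rewrite [Nat.land o (Nat.land b o)]Nat.land_comm -Nat.land_assoc Nat.land_diag Nat.land_comm.
Qed.

Lemma modn_divn_modn x a b d : 0 < a -> d %| b -> x %% (a * b) %/ a %% d = x %/ a %% d.
Proof.
move=> a_gt0 /dvdnP [e ->].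
rewrite {2}(divn_eq x (a * (e * d))).
have -> : x %/ (a * (e * d)) * (a * (e * d)) = x %/ (a * (e * d)) * e * d * a by nia.
by rewrite divnMDl // -modnDm modnMl add0n modn_mod.
Qed.

Lemma uword_umod w x t : t < w -> uword w (umod w x) t = uword w x t.
Proof.
move=> t_lt; rewrite /uword /umod.
have -> : w * w = t * w + (w - t) * w by rewrite -mulnDl subnKC // ltnW.
rewrite expnD modn_divn_modn ?expn_gt0 //.
by apply: dvdn_exp2l; rewrite leq_pmull // subn_gt0.
Qed.

Lemma umod_small w x : x < 2 ^ (w * w) -> umod w x = x.
Proof. exact: modn_small. Qed.

Lemma uword_inj w n x y : x < 2 ^ (n * w) -> y < 2 ^ (n * w) ->
  (forall t, t < n -> uword w x t = uword w y t) -> x = y.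
Proof.
elim: n x y => [|n IH] x y x_lt y_lt eq_xy.
  by move: x_lt y_lt; rewrite mul0n expn0 !ltnS !leqn0 => /eqP -> /eqP ->.
rewrite (divn_eq x (2 ^ w)) (divn_eq y (2 ^ w)).
have := eq_xy 0 (ltn0Sn n); rewrite /uword !mul0n expn0 !divn1 => ->.
congr (_ * _ + _); apply: IH.
- by rewrite ltn_divLR ?expn_gt0 // -expnD addnC -mulSn.
- by rewrite ltn_divLR ?expn_gt0 // -expnD addnC -mulSn.
- by move=> t t_lt; have := eq_xy t.+1 t_lt; rewrite /uword mulSn expnD -!divnMA.
Qed.

Lemma ubin_USub w x y : y <= x -> x < 2 ^ (w * w) -> ubin w USub x y = x - y.
Proof.
move=> y_le x_lt; rewrite /ubin /umod (modn_small (leq_ltn_trans y_le x_lt)).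
have -> : x + 2 ^ (w * w) - y = x - y + 1 * 2 ^ (w * w) by lia.
by rewrite addnC modnMDl modn_small // (leq_ltn_trans (leq_subr _ _) x_lt).
Qed.

Fixpoint pack (w L n : nat) (f : nat -> nat) : nat :=
  if n is n'.+1 then pack w L n' f + f n' * 2 ^ (n' * L * w) else 0.

Section Pack.
Variables (w L : nat).
Implicit Types (f g : nat -> nat).

Lemma eq_pack n f g : (forall i, i < n -> f i = g i) -> pack w L n f = pack w L n g.
Proof.
elim: n => [|n IH] eq_fg //=.
by rewrite IH ?eq_fg // => i i_lt; apply: eq_fg; apply: ltnW.
Qed.

Lemma pack_eq0 n f : (forall i, i < n -> f i = 0) -> pack w L n f = 0.
Proof. by elim: n => [|n IH] f0 //=; rewrite IH ?f0 // => i /ltnW; apply: f0. Qed.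

Lemma pack1 f : pack w L 1 f = f 0.
Proof. by rewrite /= mul0n expn0 muln1. Qed.

Lemma pack_lt n f : (forall i, i < n -> f i < 2 ^ (L * w)) -> pack w L n f < 2 ^ (n * L * w).
Proof.
elim: n => [|n IH] f_lt /=; first by rewrite expn_gt0.
have lo_lt := IH (fun i i_lt => f_lt i (ltnW i_lt)).
have hi_lt := f_lt n (ltnSn n).
have -> : n.+1 * L * w = n * L * w + L * w by rewrite mulSn mulnDl addnC.
rewrite expnD.
apply: (@leq_trans (2 ^ (n * L * w) + (2 ^ (L * w)).-1 * 2 ^ (n * L * w))).
  by rewrite -addSn leq_add // leq_mul2r -ltnS prednK ?expn_gt0 // hi_lt orbT.
by rewrite -[X in X + _]mul1n -mulnDl add1n prednK ?expn_gt0 // mulnC.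
Qed.

Lemma pack_lt_ultra n f : n * L <= w -> (forall i, i < n -> f i < 2 ^ (L * w)) ->
  pack w L n f < 2 ^ (w * w).
Proof.
move=> nL_le f_lt; apply: leq_trans (pack_lt f_lt) _.
by rewrite leq_exp2l // leq_mul2r nL_le orbT.
Qed.

Lemma pack_cat k n f :
  pack w L (k + n) f = pack w L k f + 2 ^ (k * L * w) * pack w L n (fun i => f (k + i)).
Proof.
elim: n => [|n IH] /=; first by rewrite addn0 muln0 addn0.
rewrite addnS /= IH mulnDr addnA; congr (_ + _).
by rewrite mulnCA -expnD !mulnDl.
Qed.

Lemma packD n f g : pack w L n f + pack w L n g = pack w L n (fun i => f i + g i).
Proof. elim: n => [|n IH] //=; rewrite -IH mulnDl; lia. Qed.

Lemma packB n f g : (forall i, i < n -> g i <= f i) ->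
  pack w L n f - pack w L n g = pack w L n (fun i => f i - g i).
Proof.
move=> g_le.
have -> : pack w L n f = pack w L n (fun i => f i - g i + g i).
  by apply: eq_pack => i i_lt; rewrite subnK // g_le.
by rewrite -packD addnK.
Qed.

Lemma leq_pack n f g : (forall i, i < n -> g i <= f i) -> pack w L n g <= pack w L n f.
Proof.
elim: n => [|n IH] g_le //=.
by rewrite leq_add ?IH ?leq_mul2r ?g_le ?orbT // => i /ltnW; apply: g_le.
Qed.

Lemma leq_field_pack n f k : k < n -> f k * 2 ^ (k * L * w) <= pack w L n f.
Proof.
elim: n => [|n IH] //=; rewrite ltnS leq_eqVlt => /orP [/eqP ->|k_lt].
  exact: leq_addl.
exact: leq_trans (IH k_lt) (leq_addr _ _).
Qed.

Lemma pack_take k n f : k <= n -> (forall i, k <= i < n -> f i = 0) ->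
  pack w L n f = pack w L k f.
Proof.
move=> k_le f0; rewrite -(subnKC k_le) pack_cat [pack w L (n - k) _]pack_eq0 ?muln0 ?addn0 //.
by move=> i i_lt; apply: f0; lia.
Qed.

Lemma uword_pack n f t : 0 < L -> (forall i, i < n -> f i < 2 ^ (L * w)) ->
  t < n * L -> uword w (pack w L n f) t = f (t %/ L) %/ 2 ^ (t %% L * w) %% 2 ^ w.
Proof.
move=> L_gt0 f_lt t_lt.
set q := t %/ L; set r := t %% L.
have q_lt : q < n by rewrite /q ltn_divLR.
have r_lt : r < L by rewrite /r ltn_mod.
have -> : n = q + (1 + (n - q - 1)) by lia.
rewrite /uword pack_cat pack_cat pack1.
set lo := pack w L q f; set hi := pack w L _ _.
have lo_lt : lo < 2 ^ (q * L * w) by apply: pack_lt => i i_lt; apply: f_lt; lia.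
have -> : t * w = q * L * w + r * w by rewrite {1}(divn_eq t L) mulnDl.
rewrite expnD divnMA addnC mulnC divnMDl ?expn_gt0 // (divn_small lo_lt) addn0.
have -> : 2 ^ (1 * L * w) * hi = 2 ^ ((L - r - 1) * w) * hi * 2 ^ w * 2 ^ (r * w).
  have -> : 1 * L * w = (L - r - 1) * w + w + r * w.
    by rewrite -[X in _ + X + _]mul1n -!mulnDl mul1n; congr (_ * _); lia.
  rewrite !expnD; nia.
by rewrite addn0 addnC divnMDl ?expn_gt0 // modnMDl.
Qed.

Lemma uword_pack_high n f t : (forall i, i < n -> f i < 2 ^ (L * w)) ->
  n * L <= t -> uword w (pack w L n f) t = 0.
Proof.
move=> f_lt t_ge; rewrite /uword divn_small ?mod0n //.
by apply: leq_trans (pack_lt f_lt) _; rewrite leq_exp2l // leq_mul2r t_ge orbT.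
Qed.

Lemma pack_regroup K n f :
  pack w L (K * n) f = pack w (n * L) K (fun r => pack w L n (fun k => f (r * n + k))).
Proof.
elim: K => [|K IH]; first by rewrite mul0n.
rewrite mulSnr pack_cat IH /=; congr (_ + _).
by rewrite mulnC; congr (_ * 2 ^ _); lia.
Qed.

End Pack.

Lemma uword_pack1 w n f t : (forall i, i < n -> f i < 2 ^ w) -> t < n ->
  uword w (pack w 1 n f) t = f t.
Proof.
move=> f_lt t_lt; rewrite uword_pack ?muln1 ?divn1 ?modn1 ?mul0n ?expn0 ?divn1 ?modn_small //.
- exact: f_lt.
- by move=> i i_lt; rewrite mul1n f_lt.
Qed.

Lemma mk_ultraE w f : mk_ultra w f = pack w 1 w (fun i => f i %% 2 ^ w).
Proof.
rewrite /mk_ultra.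
suff pack_prefix n : sumn [seq f i %% 2 ^ w * 2 ^ (i * w) | i <- iota 0 n] =
                     pack w 1 n (fun i => f i %% 2 ^ w) by [].
elim: n => [|n IH] //.
by rewrite -[n.+1]addn1 iotaD map_cat sumn_cat IH add0n addn1 /= addn0 muln1.
Qed.

Lemma uword_mk_ultra w f t : t < w -> uword w (mk_ultra w f) t = f t %% 2 ^ w.
Proof. by move=> t_lt; rewrite mk_ultraE uword_pack1 // => i _; rewrite ltn_pmod ?expn_gt0. Qed.

Section PrefixArgmin.
Variable X : seq nat.
Notation x k := (nth 0 X k).

(* Ties are won by the smaller position, so that [pargmin i j] singles out the
   leftmost minimum of [x 0, ..., x i]. *)
Definition beats (j k : nat) : bool := if k < j then x k <= x j else x k < x j.

Definition pargmin (i j : nat) : bool := (j <= i) && all (fun k => ~~ beats j k) (iota 0 i.+1).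

Lemma pargminP i j : reflect (j <= i /\ forall k, k <= i -> ~~ beats j k) (pargmin i j).
Proof.
apply: (iffP andP) => [[j_le /allP nb]|[j_le nb]]; split => //.
  by move=> k k_le; apply: nb; rewrite mem_iota; lia.
by apply/allP => k; rewrite mem_iota => k_lt; apply: nb; lia.
Qed.

Lemma pmin_at_le i k : k <= i -> pmin_at X i <= x k.
Proof.
elim: i => [|i IH] /=; first by rewrite leqn0 => /eqP ->.
rewrite leq_eqVlt => /orP [/eqP ->|k_lt]; first by rewrite geq_minr.
by rewrite geq_min IH.
Qed.

Lemma pmin_at_attained i : exists2 k, k <= i & pmin_at X i = x k.
Proof.
elim: i => [|i [k k_le IH]] /=; first by exists 0.
case: (leqP (pmin_at X i) (x i.+1)) => cmp; first by exists k; lia.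
by exists i.+1 => //; lia.
Qed.

Lemma pargmin_pmin i j : pargmin i j -> x j = pmin_at X i.
Proof.
move/pargminP => [j_le nb]; have [k k_le e] := pmin_at_attained i.
apply/eqP; rewrite eqn_leq pmin_at_le // andbT e.
by have := nb k k_le; rewrite /beats; case: ltnP => _; lia.
Qed.

Lemma pargmin_uniq i j1 j2 : pargmin i j1 -> pargmin i j2 -> j1 = j2.
Proof.
wlog j12 : j1 j2 / j1 <= j2.
  by move=> W g1 g2; case: (leqP j1 j2) => [/W|/ltnW /W] ->.
move=> /pargminP [_ nb1] /pargminP [j2_le nb2].
apply/eqP; rewrite eqn_leq j12 /= leqNgt; apply/negP => j12_lt.
have := nb1 j2 j2_le; have := nb2 j1 (leq_trans j12 j2_le).
by rewrite /beats j12_lt; case: ltnP => _; lia.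
Qed.

Lemma pargmin_exists i : exists2 j, j <= i & pargmin i j.
Proof.
have [k0 k0_le e0] := pmin_at_attained i.
have ex : exists k, (k <= i) && (x k == pmin_at X i) by exists k0; rewrite k0_le e0 eqxx.
case: (ex_minnP ex) => j /andP [j_le /eqP xj] j_min.
exists j => //; apply/pargminP; split => // k k_le; rewrite /beats.
case: ltnP => [k_lt|]; last by rewrite -leqNgt xj pmin_at_le.
apply/negP => xk_le; have := pmin_at_le k_le; rewrite -xj => xj_le.
have := j_min k; rewrite k_le /=.
have -> : x k = x j by lia.
by rewrite xj eqxx => /(_ isT); lia.
Qed.

End PrefixArgmin.

Lemma divn_subDl lo h b d : b <= lo < d -> (lo + d * h - b) %/ d = h.
Proof.
move=> /andP [b_le lo_lt].
have -> : lo + d * h - b = h * d + (lo - b) by lia.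
by rewrite divnMDl ?divn_small ?addn0 //; lia.
Qed.

Lemma divn_mulB h b d : 0 < b <= d -> 0 < h -> (d * h - b) %/ d = h.-1.
Proof.
move=> /andP [b_gt0 b_le] h_gt0.
have -> : d * h - b = h.-1 * d + (d - b) by rewrite -[in LHS](prednK h_gt0); nia.
by rewrite divnMDl ?divn_small ?addn0 //; lia.
Qed.

(* The borrow runs up to the first set bit, which exists thanks to the guard
   [b n.-1]. *)
Lemma uword_borrow w n b kap : 0 < w -> (forall k, k < n -> b k <= 1) -> kap < n ->
  b n.-1 = 1 ->
  uword w (pack w 2 n (fun k => b k * 2 ^ w) - 2 ^ w) (2 * kap + 1) =
  if all (fun k => b k == 0) (iota 0 kap) then (if b kap == 1 then 0 else 2 ^ w - 1)
  else b kap.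
Proof.
move=> w_gt0 b_le1 kap_lt guard.
have B_gt0 : 0 < 2 ^ w by rewrite expn_gt0.
have -> : n = kap + (1 + (n - kap - 1)) by lia.
rewrite pack_cat pack_cat pack1 addn0 /uword.
set lo := pack w 2 kap _; set rest := pack w 2 (n - kap - 1) _.
set D := 2 ^ ((2 * kap + 1) * w).
have B_le_D : 2 ^ w <= D by rewrite leq_exp2l //; lia.
have bk_le1 : b kap <= 1 by apply: b_le1.
have lo_lt : lo < D.
  apply: leq_trans (_ : 2 ^ (kap * 2 * w) <= D); last by rewrite leq_exp2l //; lia.
  apply: pack_lt => i i_lt; have := b_le1 i (ltn_trans i_lt kap_lt).
  case: (b i) => [|[|//]] _; rewrite ?mul0n ?mul1n ?expn_gt0 // ltn_exp2l //; lia.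
have -> : 2 ^ (kap * 2 * w) * (b kap * 2 ^ w + 2 ^ (1 * 2 * w) * rest)
          = D * (b kap + 2 ^ w * rest).
  rewrite /D (_ : (2 * kap + 1) * w = kap * 2 * w + w); last by lia.
  rewrite (_ : 1 * 2 * w = w + w); last by lia.
  rewrite !expnD; nia.
case: ifP => [all0|/negbT /allPn [k]]; last first.
  rewrite mem_iota add0n => k_lt bk_neq0.
  have bk1 : b k = 1 by have := b_le1 k (ltn_trans k_lt kap_lt); case: (b k) bk_neq0 => [|[|]].
  have B_le_lo : 2 ^ w <= lo.
    apply: leq_trans (leq_field_pack w 2 (fun k => b k * 2 ^ w) k_lt).
    by rewrite bk1 mul1n leq_pmulr ?expn_gt0.
  rewrite divn_subDl ?B_le_lo // addnC mulnC modnMDl modn_small //.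
  by apply: leq_ltn_trans bk_le1 _; rewrite -{1}(expn0 2) ltn_exp2l.
have -> : lo = 0.
  apply: pack_eq0 => k k_lt; move/allP: all0 => /(_ k).
  by rewrite mem_iota add0n k_lt => /(_ isT) /eqP ->.
have rest_gt0 : b kap = 0 -> 0 < rest.
  case: (ltnP kap n.-1) => [kap_lt' _|kap_ge]; last by rewrite (_ : kap = n.-1) ?guard //; lia.
  have last_lt : n - kap - 2 < n - kap - 1 by lia.
  have := leq_field_pack w 2 (fun i => b (kap + (1 + i)) * 2 ^ w) last_lt.
  rewrite (_ : kap + (1 + (n - kap - 2)) = n.-1) ?guard ?mul1n -/rest; last by lia.
  apply: leq_trans.
  by rewrite muln_gt0 !expn_gt0.
rewrite add0n divn_mulB ?B_le_D ?B_gt0 //; last first.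
  by case: (b kap) rest_gt0 => [/(_ erefl)|] //; rewrite muln_gt0 B_gt0.
case: (b kap) bk_le1 rest_gt0 => [_ /(_ erefl) rest_gt0|[_ _|//]] /=.
  have -> : (0 + 2 ^ w * rest).-1 = rest.-1 * 2 ^ w + (2 ^ w - 1) by nia.
  by rewrite modnMDl modn_small // ltn_subrL B_gt0.
by rewrite add0n mulnC modnMl.
Qed.

Lemma pack_pairs w d : (forall t, w./2 * 2 <= t < w -> d t = 0) ->
  pack w 1 w d = pack w 2 w./2 (fun s => d (s * 2) + d (s * 2 + 1) * 2 ^ w).
Proof.
move=> d0; rewrite (@pack_take w 1 (w./2 * 2) w d) //; last first.
  by have := odd_double_half w; rewrite -muln2; lia.
rewrite pack_regroup; apply: eq_pack => s _.
by rewrite /= mul0n expn0 muln1 add0n addn0 !mul1n.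
Qed.

Lemma gather_pack w M d : (forall t, t < w -> d t < 2 ^ w) ->
  mk_ultra w (fun t => M (uword w (umod w (pack w 1 w d)) t)) =
  pack w 1 w (fun t => M (d t) %% 2 ^ w).
Proof.
move=> d_lt; rewrite mk_ultraE; apply: eq_pack => t t_lt.
by rewrite uword_umod // uword_pack1.
Qed.

Lemma carry_bit a b e w : a < 2 ^ w -> b < 2 ^ w -> e <= 1 ->
  (a + (2 ^ w - e) - b) %/ 2 ^ w = (b + e <= a).
Proof.
move=> a_lt b_lt e_le1; have B_gt0 := expn_gt0 2 w.
case: leqP => le_a; last by rewrite divn_small //; lia.
have -> : a + (2 ^ w - e) - b = 1 * 2 ^ w + (a - b - e) by lia.
by rewrite divnMDl // divn_small ?addn0 //; lia.
Qed.

(* Chunk [c] holds the rows [c R, ..., c R + R - 1] of the comparison matrix;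
   its slot [s] is the entry (row [slot_row s], column [slot_col s]) and
   occupies words [2 s] and [2 s + 1].  Each row has [l] comparison slots
   followed by one guard slot.  The input is kept at addresses [w, w + l) and
   address [2 w] holds 0. *)
Definition slot_row (l R c s : nat) := c * R + s %/ l.+1.
Definition slot_col (l s : nat) := s %% l.+1.
Definition slot_used (l R c s : nat) := (s < R * l.+1) && (slot_row l R c s < l).
Definition slot_cmp (l R c s : nat) := slot_used l R c s && (slot_col l s < l).
Definition slot_guard (l R c s : nat) := slot_used l R c s && (slot_col l s == l).
(* Subtracted before taking the carry: it makes the comparison strict when the
   column is not left of the row, and turns the carry of any other slot into
   its guard flag. *)
Definition tiebreak (l R c s : nat) : nat :=
  if slot_cmp l R c s then slot_row l R c s <= slot_col l s else ~~ slot_guard l R c s.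

Definition slot_addr w l R c (pos : nat -> nat) t :=
  if ~~ odd t && slot_cmp l R c t./2 then w + pos t./2 else 2 * w.
(* Pairwise distinct addresses beyond the output and the input; the parity
   term makes [dummy_addr - slot_col] even. *)
Definition dummy_addr w l t := 4 * w + 2 * t + slot_col l t./2 %% 2.
Definition hit_word l R c t :=
  odd t && slot_cmp l R c t./2 && (slot_row l R c t./2 <= slot_col l t./2).
Definition hit_mask_word w l R c t :=
  if hit_word l R c t then dummy_addr w l t - slot_col l t./2 else 0.
Definition row_val_addr w l R c t := w + slot_row l R c t./2.

Definition row_addrs w l R c := pack w 1 w (slot_addr w l R c (slot_row l R c)).
Definition col_addrs w l R c := pack w 1 w (slot_addr w l R c (slot_col l)).
Definition tiebreak_offsets w l R c := pack w 2 w./2 (fun s => 2 ^ w - tiebreak l R c s).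
Definition high_bits w := pack w 2 w./2 (fun _ => 2 ^ w).
Definition guard_borrows w l R c := pack w (l.+1 * 2) R (fun r => (c * R + r < l) * 2 ^ w).
Definition hit_mask w l R c := pack w 1 w (hit_mask_word w l R c).
Definition dummy_addrs w l := pack w 1 w (dummy_addr w l).
Definition row_val_addrs w l R c := pack w 1 w (row_val_addr w l R c).

Lemma odd_halfK t : odd t -> t./2 * 2 + 1 = t.
Proof. by move=> t_odd; have := odd_double_half t; rewrite t_odd -muln2 addnC. Qed.

Lemma div_mod_double_odd s L : 0 < L ->
  (s * 2 + 1) %/ (L * 2) = s %/ L /\ (s * 2 + 1) %% (L * 2) = s %% L * 2 + 1.
Proof.
move=> L_gt0.
have -> : s * 2 + 1 = s %/ L * (L * 2) + (s %% L * 2 + 1) by rewrite {1}(divn_eq s L); lia.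
have rem_lt : s %% L * 2 + 1 < L * 2 by have := ltn_pmod s L_gt0; lia.
by rewrite divnMDl ?muln_gt0 ?L_gt0 // (divn_small rem_lt) addn0 modnMDl modn_small.
Qed.

Section Chunk.
Variables (w l R c : nat) (X : seq nat) (M : nat -> nat).
Hypothesis rows_fit : R * l.+1 <= w./2.
Hypothesis chunk_in : c * R < l.
Hypothesis l_lt_w : l < w.
Hypothesis w_large : 8 * w <= 2 ^ w.
Hypothesis X_lt : forall k, k < l -> nth 0 X k < 2 ^ w.
Hypothesis M_X : forall k, k < l -> M (w + k) = nth 0 X k.
Hypothesis M_2w : M (2 * w) = 0.

Notation x k := (nth 0 X k).
Notation S := w./2.
Notation cmp := (slot_cmp l R c).
Notation row := (slot_row l R c).
Notation col := (slot_col l).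

Lemma w_gt0 : 0 < w. Proof. lia. Qed.
Lemma half_w_double : S * 2 <= w. Proof. by have := odd_double_half w; rewrite -muln2; lia. Qed.
Lemma rows_fit_words : R * (l.+1 * 2) <= w. Proof. by have := half_w_double; nia. Qed.
Lemma two_le_exp2w : 2 <= 2 ^ w. Proof. by apply: leq_trans w_large; have := w_gt0; lia. Qed.
Lemma double_exp2w : 2 ^ w + 2 ^ w <= 2 ^ (2 * w).
Proof. by have := two_le_exp2w; rewrite mul2n -addnn expnD; nia. Qed.

Lemma cmp_row s : cmp s -> row s < l.
Proof. by case/andP => /andP []. Qed.
Lemma cmp_col s : cmp s -> col s < l.
Proof. by case/andP. Qed.
Lemma cmp_slot s : cmp s -> s < R * l.+1.
Proof. by case/andP => /andP []. Qed.

Lemma slot_unused s : S <= s -> slot_used l R c s = false.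
Proof. by move=> s_ge; apply/andP => [[s_lt _]]; lia. Qed.

Lemma row_slotE r k : k < l.+1 -> row (r * l.+1 + k) = c * R + r /\ col (r * l.+1 + k) = k.
Proof. by move=> k_lt; rewrite /slot_row /slot_col divnMDl // divn_small // addn0 modnMDl modn_small. Qed.

Lemma row_slot_cmp r k : r < R -> c * R + r < l -> k < l ->
  [/\ cmp (r * l.+1 + k), col (r * l.+1 + k) = k & row (r * l.+1 + k) = c * R + r].
Proof.
move=> r_lt active k_lt; have [row_e col_e] := row_slotE r (ltnW k_lt).
by rewrite /slot_cmp /slot_used row_e col_e active k_lt !andbT; split => //; nia.
Qed.

Definition slot_val (pos : nat -> nat) s := if cmp s then x (pos s) else 0.

Lemma slot_val_lt pos s : (forall s, cmp s -> pos s < l) -> slot_val pos s < 2 ^ w.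
Proof. by rewrite /slot_val => pos_lt; case: ifP => [/pos_lt /X_lt|_]; rewrite ?expn_gt0. Qed.

Lemma gather_slot_vals pos : (forall s, cmp s -> pos s < l) ->
  mk_ultra w (fun t => M (uword w (umod w (pack w 1 w (slot_addr w l R c pos))) t)) =
  pack w 2 S (slot_val pos).
Proof.
move=> pos_lt; rewrite gather_pack; last first.
  by move=> t t_lt; rewrite /slot_addr; case: ifP => [/andP [_ /pos_lt]|_]; lia.
rewrite pack_pairs; last first.
  move=> t /andP [t_ge _]; rewrite /slot_addr.
  have -> : cmp t./2 = false by rewrite /slot_cmp slot_unused //; have := odd_double_half t; lia.
  by rewrite andbF M_2w mod0n.
apply: eq_pack => s _; rewrite /slot_addr /slot_val oddD oddM /= andbF /=.
rewrite (_ : (s * 2)./2 = s) ?muln2 ?doubleK // M_2w mod0n mul0n addn0.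
case: ifP => cmp_s; last by rewrite M_2w mod0n.
by rewrite M_X ?modn_small ?X_lt ?pos_lt.
Qed.

Lemma tiebreak_le1 s : tiebreak l R c s <= 1.
Proof. by rewrite /tiebreak; case: ifP => _; apply: leq_b1. Qed.

Notation row_val := (slot_val row).
Notation col_val := (slot_val col).

Definition cmp_field s := row_val s + (2 ^ w - tiebreak l R c s) - col_val s.
Definition beat_bit s := cmp_field s %/ 2 ^ w.

Lemma row_val_lt s : row_val s < 2 ^ w. Proof. exact: slot_val_lt cmp_row. Qed.
Lemma col_val_lt s : col_val s < 2 ^ w. Proof. exact: slot_val_lt cmp_col. Qed.

Lemma add_tiebreak_offsets :
  ubin w UAdd (pack w 2 S row_val) (umod w (tiebreak_offsets w l R c)) =
  pack w 2 S (fun s => row_val s + (2 ^ w - tiebreak l R c s)).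
Proof.
have B_gt0 : 0 < 2 ^ w by rewrite expn_gt0.
have B2 := double_exp2w.
rewrite /ubin /tiebreak_offsets [umod w (pack _ _ _ _)]umod_small; last first.
  by apply: pack_lt_ultra half_w_double _ => i _; lia.
rewrite packD umod_small //; apply: pack_lt_ultra half_w_double _ => i _.
by have := row_val_lt i; lia.
Qed.

Lemma sub_col_vals :
  ubin w USub (pack w 2 S (fun s => row_val s + (2 ^ w - tiebreak l R c s))) (pack w 2 S col_val)
  = pack w 2 S cmp_field.
Proof.
rewrite ubin_USub ?packB ?leq_pack //.
- by move=> i _; have := col_val_lt i; have := tiebreak_le1 i; lia.
- by move=> i _; have := col_val_lt i; have := tiebreak_le1 i; lia.
- by apply: pack_lt_ultra half_w_double _ => i _; have := row_val_lt i; have := double_exp2w; lia.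
Qed.

Lemma cmp_field_lt s : cmp_field s < 2 ^ (2 * w).
Proof. by rewrite /cmp_field; have := row_val_lt s; have := double_exp2w; lia. Qed.

Lemma beat_bitE s : beat_bit s = if cmp s then beats X (row s) (col s) else slot_guard l R c s.
Proof.
rewrite /beat_bit /cmp_field carry_bit ?row_val_lt ?col_val_lt ?tiebreak_le1 //.
rewrite /slot_val /tiebreak /beats; case: ifP => _; last by case: slot_guard.
by case: ltnP => _; rewrite ?addn0 ?addn1.
Qed.

Lemma beat_bit_le1 s : beat_bit s <= 1.
Proof. by rewrite beat_bitE; case: ifP => _; apply: leq_b1. Qed.

Lemma beat_bit_word_lt s : beat_bit s * 2 ^ w < 2 ^ (2 * w).
Proof. by have := beat_bit_le1 s; have := double_exp2w; have := expn_gt0 2 w; nia. Qed.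

Lemma mask_high_bits : umod w (Nat.land (pack w 2 S cmp_field) (umod w (high_bits w))) =
                       pack w 2 S (fun s => beat_bit s * 2 ^ w).
Proof.
have B_gt0 : 0 < 2 ^ w by rewrite expn_gt0.
have field_lt i : i < S -> cmp_field i < 2 ^ (2 * w) by move=> _; apply: cmp_field_lt.
have high_lt i : i < S -> 2 ^ w < 2 ^ (2 * w) by move=> _; have := double_exp2w; lia.
have bit_lt i : i < S -> beat_bit i * 2 ^ w < 2 ^ (2 * w) by move=> _; apply: beat_bit_word_lt.
apply: (@uword_inj w w); first by rewrite /umod ltn_pmod ?expn_gt0.
  exact: pack_lt_ultra half_w_double bit_lt.
move=> t t_lt; rewrite uword_umod // uword_land uword_umod //.
case: (ltnP t (S * 2)) => t_S; last by rewrite /high_bits !(uword_pack_high _ t_S).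
rewrite /high_bits !uword_pack //.
have : t %% 2 < 2 by rewrite ltn_mod.
case: (t %% 2) => [|[|//]] _; first by rewrite mul0n expn0 !divn1 modnn modnMl Nat.land_0_r.
have bit_lt' : beat_bit (t %/ 2) < 2 ^ w := leq_ltn_trans (beat_bit_le1 _) two_le_exp2w.
have high1 : 2 ^ w %/ 2 ^ w %% 2 ^ w = 1 by rewrite divnn B_gt0 modn_small ?two_le_exp2w.
have bitE : cmp_field (t %/ 2) %/ 2 ^ w %% 2 ^ w = beat_bit (t %/ 2) by rewrite modn_small.
by rewrite mul1n high1 bitE mulnK // modn_small // land_bit1 // beat_bit_le1.
Qed.

Definition row_bits r := pack w 2 l.+1 (fun k => beat_bit (r * l.+1 + k) * 2 ^ w).
Definition row_active r : nat := c * R + r < l.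

Lemma guard_beat_bit r : r < R -> c * R + r < l -> beat_bit (r * l.+1 + l) = 1.
Proof.
move=> r_lt active; have [row_e col_e] := row_slotE r (ltnSn l).
rewrite beat_bitE /slot_cmp /slot_guard /slot_used row_e col_e ltnn eqxx active !andbT andbF /=.
by nia.
Qed.

Lemma pack_beat_rows : pack w 2 S (fun s => beat_bit s * 2 ^ w) = pack w (l.+1 * 2) R row_bits.
Proof.
rewrite (@pack_take w 2 (R * l.+1)) ?pack_regroup // => i /andP [i_ge _].
by rewrite beat_bitE /slot_cmp /slot_guard /slot_used ltnNge i_ge.
Qed.

Lemma row_bits_lt r : row_bits r < 2 ^ (l.+1 * 2 * w).
Proof. by apply: pack_lt => i _; apply: beat_bit_word_lt. Qed.

Lemma sub_guard_borrows :
  ubin w USub (pack w (l.+1 * 2) R row_bits) (umod w (guard_borrows w l R c)) =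
  pack w (l.+1 * 2) R (fun r => row_bits r - row_active r * 2 ^ w).
Proof.
have borrow_le r : r < R -> row_active r * 2 ^ w <= row_bits r.
  move=> r_lt; rewrite /row_active; case: ltnP => active; last by rewrite mul0n.
  apply: leq_trans (leq_field_pack w 2 _ (ltnSn l)).
  by rewrite guard_beat_bit // mul1n leq_pmulr ?expn_gt0.
rewrite /guard_borrows umod_small; last first.
  apply: pack_lt_ultra rows_fit_words _ => r r_lt.
  exact: leq_ltn_trans (borrow_le r r_lt) (row_bits_lt r).
rewrite ubin_USub ?packB ?leq_pack //.
by apply: pack_lt_ultra rows_fit_words _ => r _; apply: row_bits_lt.
Qed.

Lemma dummy_addr_lt t : t < w -> dummy_addr w l t < 2 ^ w.
Proof. by move=> t_lt; rewrite /dummy_addr; have := ltn_pmod (col t./2) (isT : 0 < 2); lia. Qed.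

Lemma hit_mask_word_lt t : t < w -> hit_mask_word w l R c t < 2 ^ w.
Proof.
move=> t_lt; rewrite /hit_mask_word; case: ifP => _; rewrite ?expn_gt0 //.
exact: leq_ltn_trans (leq_subr _ _) (dummy_addr_lt t_lt).
Qed.

Lemma hit_mask_word_even t : hit_mask_word w l R c t %% 2 = 0.
Proof. by rewrite /hit_mask_word /dummy_addr; case: ifP => _ //; lia. Qed.

Definition hit t := odd t && cmp t./2 && pargmin X (col t./2) (row t./2).

Lemma hit_hit_word t : hit t -> hit_word l R c t.
Proof. by case/andP => t_cmp /andP [row_le _]; rewrite /hit_word t_cmp row_le. Qed.

Lemma uword_borrowed_rows t : t < w -> hit_word l R c t ->
  uword w (pack w (l.+1 * 2) R (fun r => row_bits r - row_active r * 2 ^ w)) t =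
  if all (fun k => ~~ beats X (row t./2) k) (iota 0 (col t./2))
  then (if beats X (row t./2) (col t./2) then 0 else 2 ^ w - 1)
  else beats X (row t./2) (col t./2).
Proof.
move=> t_lt /andP [/andP [t_odd cmp_t] _].
set s := t./2; set r := s %/ l.+1.
have [t_div t_mod] := div_mod_double_odd s (ltn0Sn l).
have r_lt : r < R by rewrite /r ltn_divLR ?cmp_slot.
have active : c * R + r < l by apply: cmp_row.
have col_lt : col s < l := cmp_col cmp_t.
have bitsE k : k < l -> beat_bit (r * l.+1 + k) = beats X (row s) k.
  move=> k_lt; have [cmp_k col_k row_k] := row_slot_cmp r_lt active k_lt.
  by rewrite beat_bitE cmp_k col_k row_k.
rewrite -(odd_halfK t_odd) uword_pack //; first last.
- by rewrite odd_halfK //; have := rows_fit_words; nia.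
- by move=> i _; apply: leq_ltn_trans (leq_subr _ _) (row_bits_lt i).
rewrite -/s t_div t_mod /row_active active mul1n /row_bits -/r -[s %% l.+1]/(col s).
rewrite [col s * 2]mulnC -/(uword _ _ _).
rewrite (uword_borrow w_gt0 (fun k _ => beat_bit_le1 _) (leqW col_lt)); last first.
  by rewrite /= guard_beat_bit.
have allE : all (fun k => beat_bit (r * l.+1 + k) == 0) (iota 0 (col s)) =
            all (fun k => ~~ beats X (row s) k) (iota 0 (col s)).
  apply: eq_in_all => k; rewrite mem_iota add0n => k_lt.
  by rewrite bitsE; [case: beats | lia].
by rewrite allE bitsE //; case: beats.
Qed.

Lemma mask_hits :
  umod w (Nat.land (pack w (l.+1 * 2) R (fun r => row_bits r - row_active r * 2 ^ w))
                   (umod w (hit_mask w l R c))) =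
  pack w 1 w (fun t => if hit t then hit_mask_word w l R c t else 0).
Proof.
have masked_lt t : t < w -> (if hit t then hit_mask_word w l R c t else 0) < 2 ^ w.
  by move=> t_lt; case: ifP => _; rewrite ?expn_gt0 ?hit_mask_word_lt.
apply: (@uword_inj w w); first by rewrite /umod ltn_pmod ?expn_gt0.
  by apply: pack_lt_ultra; rewrite ?muln1 // => i; rewrite mul1n; apply: masked_lt.
move=> t t_lt; rewrite uword_umod // uword_land uword_umod // /hit_mask.
rewrite !uword_pack1 // => [|i]; last exact: hit_mask_word_lt.
have [hw|not_hw] := boolP (hit_word l R c t); last first.
  have not_hit : hit t = false by apply/negbTE; apply: contra not_hw; apply: hit_hit_word.
  by rewrite /hit_mask_word (negbTE not_hw) not_hit Nat.land_0_r.
have mask_lt := hit_mask_word_lt t_lt; have mask_even := hit_mask_word_even t.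
rewrite uword_borrowed_rows // /hit.
move: (hw); rewrite /hit_word => /andP [-> row_le] /=.
rewrite /pargmin row_le -[(col t./2).+1]addn1 iotaD all_cat /= andbT.
case: all; case: beats => /=; rewrite ?Nat.land_0_l //.
- exact: land_small_ones.
- exact: land1_even.
Qed.

Definition scatter_addr t := if hit t then col t./2 else dummy_addr w l t.

Lemma hit_cmp t : hit t -> cmp t./2.
Proof. by case/andP => /andP []. Qed.

Lemma hit_pargmin t : hit t -> pargmin X (col t./2) (row t./2).
Proof. by case/andP. Qed.

Lemma hit_col_lt_dummy t t' : hit t -> col t./2 < dummy_addr w l t'.
Proof. by move/hit_cmp/cmp_col; rewrite /dummy_addr; lia. Qed.

Lemma scatter_addr_lt t : t < w -> scatter_addr t < 2 ^ w.
Proof.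
move=> t_lt; rewrite /scatter_addr; case: ifP => [t_hit|_]; last exact: dummy_addr_lt.
exact: ltn_trans (hit_col_lt_dummy t t_hit) (dummy_addr_lt t_lt).
Qed.

Lemma sub_dummy_addrs :
  ubin w USub (umod w (dummy_addrs w l))
              (pack w 1 w (fun t => if hit t then hit_mask_word w l R c t else 0)) =
  pack w 1 w scatter_addr.
Proof.
have masked_le t : t < w -> (if hit t then hit_mask_word w l R c t else 0) <= dummy_addr w l t.
  by move=> _; case: ifP => // /hit_hit_word t_hw; rewrite /hit_mask_word t_hw leq_subr.
have dummies_lt : dummy_addrs w l < 2 ^ (w * w).
  by apply: pack_lt_ultra; rewrite ?muln1 // => i; rewrite mul1n; apply: dummy_addr_lt.
rewrite umod_small // ubin_USub ?leq_pack // packB //; apply: eq_pack => t _.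
rewrite /scatter_addr; case: ifP => [t_hit|_]; last by rewrite subn0.
rewrite /hit_mask_word (hit_hit_word t_hit) subKn //.
exact: ltnW (hit_col_lt_dummy t t_hit).
Qed.

Lemma row_val_addr_lt t : t < w -> row_val_addr w l R c t < 2 ^ w.
Proof.
move=> t_lt; rewrite /row_val_addr /slot_row.
have := leq_div t./2 l.+1; have := half_leq (ltnW t_lt); have := half_leq (leqnn w); lia.
Qed.

Definition scatter_addrs := [seq uword w (pack w 1 w scatter_addr) i | i <- iota 0 w].

Lemma scatter_addrsE : scatter_addrs = [seq scatter_addr i | i <- iota 0 w].
Proof.
apply/eq_in_map => t; rewrite mem_iota add0n => t_lt.
by rewrite uword_pack1 // => i; apply: scatter_addr_lt.
Qed.

Lemma hit_odd t : hit t -> odd t.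
Proof. by case/andP => /andP []. Qed.

Lemma scatter_addr_inj t1 t2 : scatter_addr t1 = scatter_addr t2 -> t1 = t2.
Proof.
rewrite /scatter_addr; case: ifP => hit1; case: ifP => hit2 e.
- have := pargmin_uniq (hit_pargmin hit1); rewrite e => /(_ _ (hit_pargmin hit2)).
  rewrite /slot_row => /addnI row_e.
  have half_e : t1./2 = t2./2.
    by rewrite (divn_eq t1./2 l.+1) (divn_eq t2./2 l.+1) row_e; move: e; rewrite /slot_col => ->.
  by rewrite -(odd_halfK (hit_odd hit1)) -(odd_halfK (hit_odd hit2)) half_e.
- by have := hit_col_lt_dummy t2 hit1; lia.
- by have := hit_col_lt_dummy t1 hit2; lia.
- move: e; rewrite /dummy_addr; have := ltn_pmod (col t1./2) (isT : 0 < 2).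
  by have := ltn_pmod (col t2./2) (isT : 0 < 2); lia.
Qed.

Lemma scatter_addrs_uniq : uniq scatter_addrs.
Proof. by rewrite scatter_addrsE map_inj_in_uniq ?iota_uniq // => t1 t2 _ _; apply: scatter_addr_inj. Qed.

Definition chunk_mem a :=
  if a \in scatter_addrs
  then uword w (mk_ultra w (fun t => M (uword w (umod w (row_val_addrs w l R c)) t)))
             (index a scatter_addrs)
  else M a.

Lemma chunk_mem_input a : w <= a <= 2 * w -> chunk_mem a = M a.
Proof.
move=> a_in; rewrite /chunk_mem; case: ifP => //.
rewrite scatter_addrsE => /mapP [t _]; rewrite /scatter_addr.
by case: ifP => [/hit_cmp/cmp_col|_]; rewrite /dummy_addr; lia.
Qed.

Lemma hit_chunk t : hit t -> c * R <= row t./2 < c * R + R.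
Proof.
move=> t_hit; rewrite /slot_row leq_addr ltn_add2l /=.
by rewrite ltn_divLR ?cmp_slot ?hit_cmp.
Qed.

Lemma chunk_mem_other i : i < l ->
  (forall j, pargmin X i j -> ~~ (c * R <= j < c * R + R)) -> chunk_mem i = M i.
Proof.
move=> i_lt not_here; rewrite /chunk_mem; case: ifP => //.
rewrite scatter_addrsE => /mapP [t _]; rewrite /scatter_addr.
case: ifP => [t_hit i_e|_]; last by rewrite /dummy_addr; lia.
by have := hit_pargmin t_hit; rewrite -i_e => /not_here; rewrite hit_chunk.
Qed.

Lemma chunk_mem_pmin i j : i < l -> pargmin X i j -> c * R <= j < c * R + R ->
  chunk_mem i = pmin_at X i.
Proof.
move=> i_lt ij /andP [j_ge j_lt].
have j_le : j <= i by case/andP: ij.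
set r := j - c * R; set s := r * l.+1 + i; set t := s * 2 + 1.
have r_lt : r < R by rewrite /r; lia.
have active : c * R + r < l by rewrite /r; lia.
have j_e : c * R + r = j by rewrite /r; lia.
have [cmp_s col_s row_s] := row_slot_cmp r_lt active i_lt.
have t_half : t./2 = s by rewrite /t muln2 addn1 (half_bit_double s true).
have t_lt : t < w by have := cmp_slot cmp_s; have := rows_fit_words; rewrite /t; nia.
have t_hit : hit t.
  by rewrite /hit t_half cmp_s col_s row_s j_e /t oddD oddM andbF.
have t_index : index i scatter_addrs = t.
  have -> : i = nth 0 scatter_addrs t.
    by rewrite scatter_addrsE (nth_map 0) ?size_iota // nth_iota // /scatter_addr t_hit t_half col_s.
  by rewrite index_uniq ?scatter_addrs_uniq // scatter_addrsE size_map size_iota.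
have i_in : i \in scatter_addrs.
  by rewrite -index_mem t_index scatter_addrsE size_map size_iota.
rewrite /chunk_mem i_in t_index uword_mk_ultra // uword_umod // /row_val_addrs.
rewrite uword_pack1 // => [|k]; last exact: row_val_addr_lt.
rewrite /row_val_addr t_half row_s j_e M_X ?modn_small ?X_lt; try lia.
exact: pargmin_pmin ij.
Qed.
End Chunk.

Lemma nth_errorE T (s : seq T) x0 i : i < size s -> List.nth_error s i = Some (nth x0 s i).
Proof. by elim: s i => [|y s IH] [|i] //= /IH. Qed.

Lemma nth_error_size T (s : seq T) i : size s <= i -> List.nth_error s i = None.
Proof. by elim: s i => [|y s IH] [|i] //= /IH. Qed.

Lemma exec_cat w p a b s s' : exec w p a s = Some s' -> exec w p (a + b) s = exec w p b s'.
Proof.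
elim: a s => [|a IH] s /=; first by case=> ->.
by case: (step w p s) => //= s''; apply: IH.
Qed.

Lemma exec_step w p n s s' : step w p s = Some s' -> exec w p n.+1 s = exec w p n s'.
Proof. by move=> /= ->. Qed.

Lemma exec_halted w p n s : halted p s -> exec w p n s = Some s.
Proof.
case: s => pc R U M /nth_error_size pc_out.
by elim: n => [|n IH] //=; rewrite /step pc_out.
Qed.

Section StepLemmas.
Variables (w : nat) (p : program) (pc : nat) (R U M : nat -> nat).

Lemma step_WConst d k : List.nth_error p pc = Some (WConst d k) ->
  step w p (State pc R U M) = Some (State pc.+1 (upd R d (wmod w k)) U M).
Proof. by rewrite /step => ->. Qed.

Lemma step_ULoad d a : List.nth_error p pc = Some (ULoad d a) ->
  step w p (State pc R U M) =
  Some (State pc.+1 R (upd U d (mk_ultra w (fun i => M (R a + i)))) M).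
Proof. by rewrite /step => ->. Qed.

Lemma step_UStore a s : List.nth_error p pc = Some (UStore a s) ->
  step w p (State pc R U M) = Some (State pc.+1 R U
    (fun j => if (R a <= j) && (j < R a + w) then uword w (U s) (j - R a) else M j)).
Proof. by rewrite /step => ->. Qed.

Lemma step_UConst d k : List.nth_error p pc = Some (UConst d k) ->
  step w p (State pc R U M) = Some (State pc.+1 R (upd U d (umod w k)) M).
Proof. by rewrite /step => ->. Qed.

Lemma step_UBin o d a b : List.nth_error p pc = Some (UBin o d a b) ->
  step w p (State pc R U M) = Some (State pc.+1 R (upd U d (ubin w o (U a) (U b))) M).
Proof. by rewrite /step => ->. Qed.

Lemma step_UGather d a : List.nth_error p pc = Some (UGather d a) ->
  step w p (State pc R U M) =
  Some (State pc.+1 R (upd U d (mk_ultra w (fun i => M (uword w (U a) i)))) M).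
Proof. by rewrite /step => ->. Qed.

Lemma step_UScatter a s : List.nth_error p pc = Some (UScatter a s) ->
  let addrs := [seq uword w (U a) i | i <- iota 0 w] in uniq addrs ->
  step w p (State pc R U M) = Some (State pc.+1 R U
    (fun j => if j \in addrs then uword w (U s) (index j addrs) else M j)).
Proof. by rewrite /step => -> /= ->. Qed.

End StepLemmas.

(* Register 1 accumulates the chunk's computation, register 0 receives the
   precomputed constants and register 2 the gathered operands. *)
Definition chunk_instr w l R c k : instr :=
  match k with
  | 0 => UConst 0 (row_addrs w l R c)
  | 1 => UGather 1 0
  | 2 => UConst 0 (col_addrs w l R c)
  | 3 => UGather 2 0
  | 4 => UConst 0 (tiebreak_offsets w l R c)
  | 5 => UBin UAdd 1 1 0
  | 6 => UBin USub 1 1 2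
  | 7 => UConst 0 (high_bits w)
  | 8 => UBin UAnd 1 1 0
  | 9 => UConst 0 (guard_borrows w l R c)
  | 10 => UBin USub 1 1 0
  | 11 => UConst 0 (hit_mask w l R c)
  | 12 => UBin UAnd 1 1 0
  | 13 => UConst 0 (dummy_addrs w l)
  | 14 => UBin USub 1 0 1
  | 15 => UConst 0 (row_val_addrs w l R c)
  | 16 => UGather 2 0
  | _ => UScatter 1 2
  end.

Definition setup_instr w k : instr :=
  match k with
  | 0 => WConst 1 w
  | 1 => ULoad 0 0
  | _ => UStore 1 0
  end.

Definition rows_per_chunk w l := w./2 %/ l.+1.
Definition nchunks w l := l %/ rows_per_chunk w l + (0 < l %% rows_per_chunk w l).

Definition pmin_instr w l pc : instr :=
  if pc < 3 then setup_instr w pc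
  else chunk_instr w l (rows_per_chunk w l) ((pc - 3) %/ 18) ((pc - 3) %% 18).

Definition pmin_prog w l : program := mkseq (pmin_instr w l) (3 + nchunks w l * 18).

Lemma nth_pmin_prog_setup w l k : k < 3 ->
  List.nth_error (pmin_prog w l) k = Some (setup_instr w k).
Proof.
by move=> k_lt; rewrite (nth_errorE (WConst 0 0)) ?size_mkseq ?nth_mkseq /pmin_instr ?k_lt //; lia.
Qed.

Lemma nth_pmin_prog_chunk w l c k : c < nchunks w l -> k < 18 ->
  List.nth_error (pmin_prog w l) (k + (3 + c * 18)) =
  Some (chunk_instr w l (rows_per_chunk w l) c k).
Proof.
move=> c_lt k_lt; rewrite (nth_errorE (WConst 0 0)) ?size_mkseq; last by nia.
rewrite nth_mkseq /pmin_instr; last by nia.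
rewrite ifF; last by lia.
have -> : k + (3 + c * 18) - 3 = c * 18 + k by lia.
by rewrite divnMDl // (divn_small k_lt) addn0 modnMDl modn_small.
Qed.

Lemma rows_per_chunk_fit w l : rows_per_chunk w l * l.+1 <= w./2.
Proof. exact: leq_divM. Qed.

Lemma chunk_start_lt w l c : 0 < rows_per_chunk w l -> c < nchunks w l ->
  c * rows_per_chunk w l < l.
Proof.
rewrite /nchunks; set R := rows_per_chunk w l => R_gt0.
have := divn_eq l R; have := ltn_pmod l R_gt0.
set q := l %/ R; set r := l %% R.
by case: (ltnP 0 r) => /= r_pos r_lt l_e c_lt; nia.
Qed.

Lemma chunk_of_lt w l j : 0 < rows_per_chunk w l -> j < l -> j %/ rows_per_chunk w l < nchunks w l.
Proof.
rewrite /nchunks; set R := rows_per_chunk w l => R_gt0 j_lt.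
have := divn_eq l R; have := ltn_pmod l R_gt0.
have := divn_eq j R; have := ltn_pmod j R_gt0.
set q := l %/ R; set r := l %% R; set qj := j %/ R; set rj := j %% R.
by case: (ltnP 0 r) => /= r_pos rj_lt j_e r_lt l_e; nia.
Qed.

Lemma upd_same f i v : upd f i v i = v.
Proof. by rewrite /upd eqxx. Qed.

Lemma upd_neq f i j v : j != i -> upd f i v j = f j.
Proof. by rewrite /upd => /negbTE ->. Qed.

Ltac simpl_upd := repeat first [rewrite upd_same | rewrite upd_neq; last done].

Section ChunkRun.
Variables (w l c : nat) (X : seq nat) (Rg U M : nat -> nat).
Notation R := (rows_per_chunk w l).
Hypothesis R_gt0 : 0 < R.
Hypothesis c_lt : c < nchunks w l.
Hypothesis l_lt_w : l < w.
Hypothesis w_large : 8 * w <= 2 ^ w.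
Hypothesis X_lt : forall k, k < l -> nth 0 X k < 2 ^ w.
Hypothesis M_X : forall k, k < l -> M (w + k) = nth 0 X k.
Hypothesis M_2w : M (2 * w) = 0.

Lemma exec_chunk : exists U', exec w (pmin_prog w l) 18 (State (3 + c * 18) Rg U M) =
  Some (State (18 + (3 + c * 18)) Rg U' (chunk_mem w l R c X M)).
Proof.
have chunk_in := chunk_start_lt R_gt0 c_lt.
have rows_fit := rows_per_chunk_fit w l.
have instr k (k_lt : k < 18) := nth_pmin_prog_chunk c_lt k_lt.
rewrite (exec_step _ (step_UConst _ _ _ _ (instr 0 isT))).
rewrite (exec_step _ (step_UGather _ _ _ _ (instr 1 isT))); simpl_upd.
rewrite (gather_slot_vals (X := X)) //; last exact: cmp_row.
rewrite (exec_step _ (step_UConst _ _ _ _ (instr 2 isT))).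
rewrite (exec_step _ (step_UGather _ _ _ _ (instr 3 isT))); simpl_upd.
rewrite (gather_slot_vals (X := X)) //; last exact: cmp_col.
rewrite (exec_step _ (step_UConst _ _ _ _ (instr 4 isT))).
rewrite (exec_step _ (step_UBin _ _ _ _ (instr 5 isT))); simpl_upd.
rewrite (add_tiebreak_offsets (M := M)) //.
rewrite (exec_step _ (step_UBin _ _ _ _ (instr 6 isT))); simpl_upd.
rewrite (sub_col_vals (M := M)) //.
rewrite (exec_step _ (step_UConst _ _ _ _ (instr 7 isT))).
rewrite (exec_step _ (step_UBin _ _ _ _ (instr 8 isT))); simpl_upd.
rewrite [ubin _ _ _ _]/= (mask_high_bits (M := M)) // pack_beat_rows //.
rewrite (exec_step _ (step_UConst _ _ _ _ (instr 9 isT))).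
rewrite (exec_step _ (step_UBin _ _ _ _ (instr 10 isT))); simpl_upd.
rewrite (sub_guard_borrows (M := M)) //.
rewrite (exec_step _ (step_UConst _ _ _ _ (instr 11 isT))).
rewrite (exec_step _ (step_UBin _ _ _ _ (instr 12 isT))); simpl_upd.
rewrite [ubin _ _ _ _]/= (mask_hits (M := M)) //.
rewrite (exec_step _ (step_UConst _ _ _ _ (instr 13 isT))).
rewrite (exec_step _ (step_UBin _ _ _ _ (instr 14 isT))); simpl_upd.
rewrite (sub_dummy_addrs _ (M := M)) //.
rewrite (exec_step _ (step_UConst _ _ _ _ (instr 15 isT))).
rewrite (exec_step _ (step_UGather _ _ _ _ (instr 16 isT))); simpl_upd.
rewrite (exec_step _ (step_UScatter _ _ (instr 17 isT) _)); simpl_upd; last first.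
  exact: (scatter_addrs_uniq _ (M := M)).
by eexists.
Qed.
End ChunkRun.

Section Run.
Variables (w l : nat) (X : seq nat).
Notation R := (rows_per_chunk w l).
Hypothesis R_gt0 : 0 < R.
Hypothesis l_lt_w : l < w.
Hypothesis w_large : 8 * w <= 2 ^ w.
Hypothesis X_size : size X = l.
Hypothesis X_words : all (fun x => x < 2 ^ w) X.

Lemma X_lt k : k < l -> nth 0 X k < 2 ^ w.
Proof. by move=> k_lt; apply: (allP X_words); rewrite mem_nth // X_size. Qed.

Definition pmin_inv c (M : nat -> nat) :=
  [/\ forall k, k < l -> M (w + k) = nth 0 X k, M (2 * w) = 0 &
      forall i j, i < l -> pargmin X i j -> j %/ R < c -> M i = pmin_at X i].

Lemma exec_setup : exists Rg U M,
  exec w (pmin_prog w l) 3 (init_state X) = Some (State 3 Rg U M) /\ pmin_inv 0 M.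
Proof.
rewrite (exec_step _ (step_WConst _ _ _ _ (nth_pmin_prog_setup w l (isT : 0 < 3)))).
rewrite (exec_step _ (step_ULoad _ _ _ _ (nth_pmin_prog_setup w l (isT : 1 < 3)))).
rewrite (exec_step _ (step_UStore _ _ _ _ (nth_pmin_prog_setup w l (isT : 2 < 3)))).
do 3 eexists; split; first reflexivity.
have w_mod : wmod w w = w by rewrite /wmod modn_small //; lia.
rewrite /upd /= w_mod; split => //.
- move=> k k_lt; rewrite leq_addr ltn_add2l (ltn_trans k_lt l_lt_w) addKn.
  by rewrite uword_mk_ultra ?(ltn_trans k_lt l_lt_w) //= X_size k_lt modn_small ?X_lt.
- by rewrite ifF ?X_size ?ifF //; lia.
Qed.

Lemma exec_chunks c : c <= nchunks w l -> forall Rg U M, pmin_inv 0 M ->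
  exists U' M', exec w (pmin_prog w l) (c * 18) (State 3 Rg U M) =
                Some (State (3 + c * 18) Rg U' M') /\ pmin_inv c M'.
Proof.
move=> + Rg U M inv0; elim: c => [|c IH] c_le; first by exists U, M; rewrite addn0.
have [U' [M' [run [M_X M_2w done_c]]]] := IH (ltnW c_le).
have [U'' run_c] := exec_chunk Rg U' R_gt0 c_le l_lt_w w_large X_lt M_X M_2w.
exists U'', (chunk_mem w l R c X M').
rewrite mulSnr (exec_cat _ run) run_c (_ : 18 + (3 + c * 18) = 3 + (c * 18 + 18)); last by lia.
have chunk_in := chunk_start_lt R_gt0 c_le.
have rows_fit := rows_per_chunk_fit w l.
split => //; split.
- by move=> k k_lt; rewrite chunk_mem_input //; [apply: M_X | lia].
- by rewrite chunk_mem_input // leqnn andbT leq_pmull.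
move=> i j i_lt ij j_lt; case: (ltnP (j %/ R) c) => j_chunk.
  rewrite chunk_mem_other //; first exact: done_c i_lt ij j_chunk.
  by move=> j' ij'; rewrite -(pargmin_uniq ij ij') -leq_divRL // leqNgt j_chunk.
apply: (chunk_mem_pmin _ _ _ _ X_lt M_X M_2w i_lt ij) => //.
have <- : j %/ R = c by lia.
by rewrite leq_divM /= {1}(divn_eq j R) ltn_add2l ltn_pmod.
Qed.

End Run.

Lemma pmin_prog_correct w l T : 0 < rows_per_chunk w l -> l < w -> 8 * w <= 2 ^ w ->
  3 + nchunks w l * 18 <= T -> computes_pmin_in w l T (pmin_prog w l).
Proof.
move=> R_gt0 l_lt_w w_large T_ge X X_size X_words.
have [Rg [U [M [run_setup inv0]]]] := exec_setup R_gt0 l_lt_w w_large X_size X_words.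
have [U' [M' [run_chunks [_ _ done_all]]]] :=
  exec_chunks R_gt0 l_lt_w w_large X_size X_words (leqnn (nchunks w l)) Rg U inv0.
have halt : halted (pmin_prog w l) (State (3 + nchunks w l * 18) Rg U' M').
  by rewrite /halted size_mkseq.
exists (State (3 + nchunks w l * 18) Rg U' M'); split => //.
  rewrite -(subnKC T_ge) (exec_cat _ run_setup) (exec_cat _ run_chunks).
  exact: exec_halted.
split=> // i i_lt; have [j j_le ij] := pargmin_exists X i.
exact: done_all i_lt ij (chunk_of_lt R_gt0 (leq_ltn_trans j_le i_lt)).
Qed.

Lemma mul8_le_exp2 w : 6 <= w -> 8 * w <= 2 ^ w.
Proof.
move=> w_ge; rewrite -(subnK w_ge); elim: (w - 6) => [|n IH] //.
by rewrite addSn expnS; lia.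
Qed.

Lemma nchunks_le w l K : 0 < rows_per_chunk w l -> l <= K * rows_per_chunk w l ->
  nchunks w l <= K.
Proof.
rewrite /nchunks; set R := rows_per_chunk w l => R_gt0 l_le.
have := divn_eq l R; have := ltn_pmod l R_gt0.
set q := l %/ R; set r := l %% R.
case: (ltnP 0 r) => /= r_pos r_lt l_e.
  by rewrite addn1 -(ltn_pmul2r R_gt0); lia.
by rewrite addn0 -(leq_pmul2r R_gt0); lia.
Qed.

Section ChunkCount.
Variables (D w l : nat).
Hypothesis w_ge : 16 * (D * D) + 64 <= w.
Hypothesis l_sqr : l * l <= D * D * w.

Lemma four_l_le_w : 4 * l <= w.
Proof.
rewrite leqNgt; apply/negP => w_lt.
have : w * w < 4 * l * (4 * l) by apply: ltn_mul.
have : 16 * (D * D) * w <= w * w by rewrite leq_mul2r; lia.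
nia.
Qed.

Lemma rows_per_chunk_gt0 : 0 < rows_per_chunk w l.
Proof.
rewrite divn_gt0 //; have := four_l_le_w.
by have := odd_double_half w; rewrite -muln2; lia.
Qed.

Lemma l_le_chunk_rows : l <= 8 * (D * D) * rows_per_chunk w l.
Proof.
set P := D * D; set R := rows_per_chunk w l; set a := R * l.+1.
have l_lt : w./2 < a + l.+1 by rewrite /a /R {1}(divn_eq w./2 l.+1) ltn_add2l ltn_pmod.
have := four_l_le_w; have := odd_double_half w; rewrite -muln2 => w_e l_le.
have a_ge : w - 2 <= 4 * a by have := leq_b1 (odd w); lia.
have [P0|P_gt0] := posnP P; first by have -> : l = 0 by move: l_sqr; rewrite -/P P0; nia.
have : l * l.+1 <= 8 * P * a.
  have : P * (w - 2) <= P * (4 * a) by rewrite leq_mul2l a_ge orbT.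
  have : w <= P * w by rewrite leq_pmull.
  rewrite mulnBr; nia.
by rewrite /a mulnA leq_mul2r.
Qed.

End ChunkCount.

Theorem lemma3 :
  forall C : nat, exists w0 T : nat,
    forall w l : nat, w0 <= w -> l * l <= C * C * w ->
      exists p : program, computes_pmin_in w l T p.
Proof.
move=> C; set D := C.+1.
exists (16 * (D * D) + 64), (3 + 8 * (D * D) * 18) => w l w_ge l_sqr.
have l_sqrD : l * l <= D * D * w by apply: leq_trans l_sqr _; rewrite /D; nia.
have R_gt0 := rows_per_chunk_gt0 w_ge l_sqrD.
exists (pmin_prog w l); apply: pmin_prog_correct => //.
- by have := four_l_le_w w_ge l_sqrD; lia.
- by apply: mul8_le_exp2; lia.
- by rewrite leq_add2l leq_mul2r nchunks_le ?orbT ?l_le_chunk_rows.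
Qed.
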